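(* The constrained equal-distance rule and the proportional rule are obviously manipulable on $\mathcal{E}_{\mathcal{SP}}$.
   Context: Let $N=\{1,\dots,n\}$ be a finite set of agents. A preference $R_i$ is a continuous complete preorder on $\mathbb{R}_+\cup\{\infty\}$ ($P_i$ strict part); its peak $p(R_i)$ is the set of maximal elements. $R_i$ is single-peaked if $p(R_i)$ is a singleton (identified with its element) and for $x,x'\in\mathbb{R}_+$, $xP_ix'$ whenever $x'<x\le p(R_i)$ or $p(R_i)\le x<x'$; $\mathcal{SP}$ is the set of these. An economy is $(R,\Omega)$, $R\in\mathcal{SP}^n$, $\Omega>0$; $\mathcal{E}_{\mathcal{SP}}$ is the set of economies; a rule is a map $\varphi:\mathcal{E}_{\mathcal{SP}}\to\mathbb{R}^n_+$ with $\sum_j\varphi_j=\Omega$. Constrained equal-distance rule $CED$: $CED_i(R,\Omega)=\max\{p(R_i)-d,0\}$ if $\sum_jp(R_j)\ge\Omega$ and $CED_i(R,\Omega)=p(R_i)+d$ if $\sum_jp(R_j)<\Omega$, where $d\ge0$ solves $\sum_jCED_j(R,\Omega)=\Omega$. Proportional rule $Pro$: $Pro_i(R,\Omega)=\frac{p(R_i)}{\sum_jp(R_j)}\Omega$ if $\sum_jp(R_j)>0$ and $\Omega/n$ otherwise. Option set $O^\varphi(R_i,\Omega)=\{\varphi_i(R_i,R_{-i},\Omega):R_{-i}\in\mathcal{SP}^{n-1}\}$. $R_i'$ is a manipulation at $(R_i,\Omega)$ if $\varphi_i(R_i',R_{-i},\Omega)P_i\varphi_i(R_i,R_{-i},\Omega)$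 for some $R_{-i}$; an obvious manipulation if moreover each $x'\in O^\varphi(R_i',\Omega)$ satisfies $x'P_ix$ for some $x\in O^\varphi(R_i,\Omega)$. A rule is obviously manipulable if it admits an obvious manipulation. *)

From Stdlib Require Import Reals Lra List ClassicalEpsilon.
Import ListNotations.
Open Scope R_scope.

(** The consumption space R_+ ∪ {∞}: [Some x] (with 0 <= x) is the real x,
    [None] is ∞. *)
Definition pt := option R.
Definition inX (x : pt) : Prop :=
  match x with Some r => 0 <= r | None => True end.

(** A preference is a binary relation on [pt]; [Rel x y] means x R_i y. *)
Definition pref := pt -> pt -> Prop.

Definition strict (Rel : pref) (x y : pt) : Prop := Rel x y /\ ~ Rel y x.

(** Sequential convergence in R_+ ∪ {∞} (order topology of [0,∞]). *)
Definition conv (u : nat -> pt) (l : pt) : Prop :=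
  match l with
  | Some a => forall eps, 0 < eps -> exists N, forall k, (N <= k)%nat ->
                exists r, u k = Some r /\ Rabs (r - a) < eps
  | None => forall M, exists N, forall k, (N <= k)%nat ->
                match u k with None => True | Some r => M < r end
  end.

Definition complete_preorder (Rel : pref) : Prop :=
  (forall x y, inX x -> inX y -> Rel x y \/ Rel y x) /\
  (forall x y z, inX x -> inX y -> inX z -> Rel x y -> Rel y z -> Rel x z).

Definition continuous_pref (Rel : pref) : Prop :=
  forall y u l, inX y -> (forall k, inX (u k)) -> conv u l ->
    ((forall k, Rel (u k) y) -> Rel l y) /\ ((forall k, Rel y (u k)) -> Rel y l).

Definition is_preference (Rel : pref) : Prop :=
  complete_preorder Rel /\ continuous_pref Rel.

Definition single_peaked_at (Rel : pref) (p : R) : Prop :=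
  0 <= p /\
  (forall x, inX x -> ((forall y, inX y -> Rel x y) <-> x = Some p)) /\
  (forall x x', 0 <= x -> 0 <= x' ->
     ((x' < x /\ x <= p) \/ (p <= x /\ x < x')) ->
     strict Rel (Some x) (Some x')).

Definition SP (Rel : pref) : Prop :=
  is_preference Rel /\ exists p, single_peaked_at Rel p.

(** The peak p(R_i) (well defined on SP). *)
Definition peak (Rel : pref) : R :=
  epsilon (inhabits 0) (fun p => single_peaked_at Rel p).

(** Profiles: agents are 0, ..., n-1. *)
Definition profile := nat -> pref.

Definition sum_agents (n : nat) (f : nat -> R) : R :=
  fold_right Rplus 0 (map f (seq 0 n)).

Definition psum (n : nat) (Rp : profile) : R :=
  sum_agents n (fun j => peak (Rp j)).

Definition valid_profile (n : nat) (Rp : profile) : Prop :=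
  forall j, (j < n)%nat -> SP (Rp j).

(** A rule: given n, a profile and Ω, the amount of each agent. *)
Definition rule := nat -> profile -> R -> nat -> R.

Definition ced_alloc (n : nat) (Rp : profile) (Om d : R) (i : nat) : R :=
  if Rle_dec Om (psum n Rp) then Rmax (peak (Rp i) - d) 0
  else peak (Rp i) + d.

Definition ced_d (n : nat) (Rp : profile) (Om : R) : R :=
  epsilon (inhabits 0)
    (fun d => 0 <= d /\ sum_agents n (ced_alloc n Rp Om d) = Om).

Definition CED : rule := fun n Rp Om i => ced_alloc n Rp Om (ced_d n Rp Om) i.

Definition Pro : rule := fun n Rp Om i =>
  if Rlt_dec 0 (psum n Rp) then peak (Rp i) / psum n Rp * Om
  else Om / INR n.

Definition upd (Rp : profile) (i : nat) (Ri : pref) : profile :=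
  fun j => if Nat.eqb j i then Ri else Rp j.

Definition valid_others (n i : nat) (Rp : profile) : Prop :=
  forall j, (j < n)%nat -> j <> i -> SP (Rp j).

Definition option_set (phi : rule) (n i : nat) (Ri : pref) (Om : R) (x : R) : Prop :=
  exists Rmi, valid_others n i Rmi /\ x = phi n (upd Rmi i Ri) Om i.

Definition manipulation (phi : rule) (n i : nat) (Ri Ri' : pref) (Om : R) : Prop :=
  SP Ri' /\
  exists Rmi, valid_others n i Rmi /\
    strict Ri (Some (phi n (upd Rmi i Ri') Om i)) (Some (phi n (upd Rmi i Ri) Om i)).

Definition obvious_manipulation (phi : rule) (n i : nat) (Ri Ri' : pref) (Om : R) : Prop :=
  manipulation phi n i Ri Ri' Om /\
  forall x', option_set phi n i Ri' Om x' ->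
    exists x, option_set phi n i Ri Om x /\ strict Ri (Some x') (Some x).

Definition obviously_manipulable (phi : rule) (n : nat) : Prop :=
  exists i Ri Om Ri', (i < n)%nat /\ SP Ri /\ 0 < Om /\
    obvious_manipulation phi n i Ri Ri' Om.

From Stdlib Require Import Reals Lra Lia List ClassicalEpsilon.
Open Scope R_scope.

(* Let agent 0 have peak 1 and let Ω = n + 2.  If all other agents have peak 0,
   the truthful report earns her more than 2 under both rules: the whole
   endowment under Pro, and 1 + (n + 1)/n under CED.  If she reports peak 0
   instead, she gets at most Ω/n <= 2 whatever the others report: under CED she
   is either rationed down to 0 or receives only the common top-up
   (Ω - Σ p)/n, and under Pro she gets 0 or the equal split Ω/n.  Every
   outcome of the lie is therefore within distance 1 of her peak, which beats
   the worst truthful outcome for the preference ranking amounts by their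
   distance to the peak. *)

Ltac case_abs := unfold Rabs in *; repeat destruct Rcase_abs; lra.

Definition dist_pref (p : R) : pref := fun x y =>
  match x, y with
  | Some a, Some b => Rabs (a - p) <= Rabs (b - p)
  | Some _, None => True
  | None, Some _ => False
  | None, None => True
  end.

Lemma dist_pref_strict p a b :
  Rabs (a - p) < Rabs (b - p) -> strict (dist_pref p) (Some a) (Some b).
Proof. intros H; split; simpl; lra. Qed.

Lemma dist_pref_complete_preorder p : complete_preorder (dist_pref p).
Proof.
  split.
  - intros [a|] [b|] _ _; simpl; auto; lra.
  - intros [a|] [b|] [c|] _ _ _; simpl; tauto || lra.
Qed.

Lemma conv_Some_near u a eps : conv u (Some a) -> 0 < eps ->
  exists k r, u k = Some r /\ Rabs (r - a) < eps.
Proof.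
  intros Hu Heps; destruct (Hu eps Heps) as [N HN].
  destruct (HN N (le_n N)) as [r Hr]; eauto.
Qed.

Lemma dist_pref_continuous p : continuous_pref (dist_pref p).
Proof.
  intros y u [a|] _ _ Hu; split; intros Hy.
  - destruct y as [b|]; [|exact I]; simpl.
    apply Rnot_lt_le; intros Hlt.
    destruct (conv_Some_near u a (Rabs (a - p) - Rabs (b - p)) Hu) as (k & r & Hk & Hr);
      [lra|].
    specialize (Hy k); rewrite Hk in Hy; simpl in Hy; case_abs.
  - destruct y as [b|]; simpl.
    + apply Rnot_lt_le; intros Hlt.
      destruct (conv_Some_near u a (Rabs (b - p) - Rabs (a - p)) Hu) as (k & r & Hk & Hr);
        [lra|].
      specialize (Hy k); rewrite Hk in Hy; simpl in Hy; case_abs.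
    + destruct (conv_Some_near u a 1 Hu) as (k & r & Hk & _); [lra|].
      specialize (Hy k); rewrite Hk in Hy; exact Hy.
  - destruct y as [b|]; [|exact I]; simpl.
    destruct (Hu (p + Rabs (b - p))) as [N HN].
    specialize (HN N (le_n N)); specialize (Hy N).
    destruct (u N) as [r|]; simpl in Hy; [case_abs|exact Hy].
  - destruct y; exact I.
Qed.

Lemma dist_pref_single_peaked p : 0 <= p -> single_peaked_at (dist_pref p) p.
Proof.
  intros Hp; split; [exact Hp|split].
  - intros x Hx; split.
    + destruct x as [a|]; intros Hmax.
      * specialize (Hmax (Some p) Hp); simpl in Hmax; f_equal; case_abs.
      * specialize (Hmax (Some 0) (Rle_refl 0)); contradiction.
    + intros -> [b|] _; simpl; [case_abs|exact I].
  - intros x x' _ _ Hxx'; apply dist_pref_strict; case_abs.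
Qed.

Lemma dist_pref_SP p : 0 <= p -> SP (dist_pref p).
Proof.
  intros Hp; split; [split|exists p].
  - apply dist_pref_complete_preorder.
  - apply dist_pref_continuous.
  - now apply dist_pref_single_peaked.
Qed.

Lemma single_peaked_at_unique Rel p q :
  single_peaked_at Rel p -> single_peaked_at Rel q -> p = q.
Proof.
  intros [Hp [Hmax_p _]] [Hq [Hmax_q _]].
  assert (Some p = Some q) as [= ->]; [|reflexivity].
  apply (proj1 (Hmax_q (Some p) Hp)), (proj2 (Hmax_p (Some p) Hp)); reflexivity.
Qed.

Lemma peak_of_single_peaked Rel p : single_peaked_at Rel p -> peak Rel = p.
Proof.
  intros Hp; apply (single_peaked_at_unique Rel); [|exact Hp].
  exact (epsilon_spec (inhabits 0) (single_peaked_at Rel) (ex_intro _ p Hp)).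
Qed.

Lemma peak_ge0 Rel : SP Rel -> 0 <= peak Rel.
Proof. intros [_ [p Hp]]; rewrite (peak_of_single_peaked _ _ Hp); apply Hp. Qed.

Lemma peak_dist_pref p : 0 <= p -> peak (dist_pref p) = p.
Proof. now intros; apply peak_of_single_peaked, dist_pref_single_peaked. Qed.

Lemma sum_agents_S n f : sum_agents (S n) f = sum_agents n f + f n.
Proof.
  unfold sum_agents; rewrite seq_S, map_app, fold_right_app; simpl.
  generalize (map f (seq 0 n)); intros l.
  induction l as [|a l IH]; simpl; lra.
Qed.

Lemma sum_agents_ext n f g :
  (forall j, (j < n)%nat -> f j = g j) -> sum_agents n f = sum_agents n g.
Proof.
  induction n as [|n IH]; intros Hfg; [reflexivity|].
  rewrite !sum_agents_S, IH, Hfg; [reflexivity|lia|intros j Hj; apply Hfg; lia].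
Qed.

Lemma sum_agents_zero n f : (forall j, (j < n)%nat -> f j = 0) -> sum_agents n f = 0.
Proof.
  induction n as [|n IH]; intros Hf; [reflexivity|].
  rewrite sum_agents_S, IH, Hf; [lra|lia|intros j Hj; apply Hf; lia].
Qed.

Lemma sum_agents_single n f i : (i < n)%nat ->
  (forall j, (j < n)%nat -> j <> i -> f j = 0) -> sum_agents n f = f i.
Proof.
  induction n as [|n IH]; intros Hi Hf; [lia|].
  rewrite sum_agents_S; destruct (Nat.eq_dec i n) as [->|Hin].
  - rewrite sum_agents_zero; [lra|]; intros j Hj; apply Hf; lia.
  - rewrite IH, (Hf n); [lra|lia|lia|lia|intros j Hj Hji; apply Hf; lia].
Qed.

Lemma sum_agents_ge0 n f : (forall j, (j < n)%nat -> 0 <= f j) -> 0 <= sum_agents n f.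
Proof.
  induction n as [|n IH]; intros Hf; [unfold sum_agents; simpl; lra|].
  rewrite sum_agents_S.
  assert (0 <= f n) by (apply Hf; lia).
  assert (0 <= sum_agents n f) by (apply IH; intros j Hj; apply Hf; lia).
  lra.
Qed.

Lemma sum_agents_ge_term n f i : (forall j, (j < n)%nat -> 0 <= f j) -> (i < n)%nat ->
  f i <= sum_agents n f.
Proof.
  induction n as [|n IH]; intros Hf Hi; [lia|].
  rewrite sum_agents_S; assert (0 <= f n) by (apply Hf; lia).
  destruct (Nat.eq_dec i n) as [->|Hin].
  - assert (0 <= sum_agents n f) by (apply sum_agents_ge0; intros j Hj; apply Hf; lia).
    lra.
  - assert (f i <= sum_agents n f) by (apply IH; [intros j Hj; apply Hf|]; lia).
    lra.
Qed.

Lemma sum_agents_plus_const n f d :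
  sum_agents n (fun j => f j + d) = sum_agents n f + INR n * d.
Proof.
  induction n as [|n IH]; [unfold sum_agents; simpl; lra|].
  rewrite !sum_agents_S, IH, S_INR; lra.
Qed.

Lemma continuity_Rmax0 f : continuity f -> continuity (fun x => Rmax (f x) 0).
Proof.
  intros Hf x.
  apply (continuity_pt_locally_ext (fun y => (f y + Rabs (f y)) / 2) _ 1); [lra| |].
  - intros y _; unfold Rmax; destruct Rle_dec; case_abs.
  - apply continuity_pt_div; [|apply continuity_pt_const; now intros ? ?|lra].
    apply continuity_pt_plus; [apply Hf|].
    apply (continuity_pt_comp f Rabs); [apply Hf|apply Rcontinuity_abs].
Qed.

Lemma continuity_sum_agents n (g : nat -> R -> R) :
  (forall j, continuity (g j)) -> continuity (fun d => sum_agents n (fun j => g j d)).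
Proof.
  intros Hg; induction n as [|n IH].
  - apply continuity_const; now intros ? ?.
  - intros x; apply (continuity_pt_locally_ext
      (fun d => sum_agents n (fun j => g j d) + g n d) _ 1); [lra| |].
    + intros y _; now rewrite sum_agents_S.
    + apply continuity_pt_plus; [apply IH|apply Hg].
Qed.

Lemma ced_alloc_supply_sum n Rp Om d : ~ Om <= psum n Rp ->
  sum_agents n (ced_alloc n Rp Om d) = psum n Rp + INR n * d.
Proof.
  intros Hsupply; unfold ced_alloc; destruct Rle_dec; [contradiction|].
  apply sum_agents_plus_const.
Qed.

Section ConstrainedEqualDistance.

Variables (n : nat) (Rp : profile) (Om : R).
Hypothesis n_gt0 : (0 < n)%nat.
Hypothesis Om_gt0 : 0 < Om.
Hypothesis peaks_ge0 : forall j, (j < n)%nat -> 0 <= peak (Rp j).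

Let n_pos : 0 < INR n.
Proof. now apply lt_0_INR. Qed.

Lemma psum_ge0 : 0 <= psum n Rp.
Proof. now apply sum_agents_ge0. Qed.

Lemma ced_distance_exists :
  exists d, 0 <= d /\ sum_agents n (ced_alloc n Rp Om d) = Om.
Proof.
  destruct (Rle_dec Om (psum n Rp)) as [Hdemand|Hsupply].
  - set (excess d := sum_agents n (fun j => Rmax (peak (Rp j) - d) 0) - Om).
    assert (Hcont : continuity excess).
    { apply continuity_minus; [|apply continuity_const; now intros ? ?].
      apply continuity_sum_agents; intros j.
      apply continuity_Rmax0, continuity_minus;
        [apply continuity_const; now intros ? ?|apply derivable_continuous, derivable_id]. }
    assert (Hexcess0 : excess 0 = psum n Rp - Om).
    { unfold excess, psum; f_equal; apply sum_agents_ext; intros j Hj.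
      rewrite Rmax_left; [lra|]; specialize (peaks_ge0 j Hj); lra. }
    assert (Hexcess_psum : excess (psum n Rp) = - Om).
    { unfold excess; rewrite sum_agents_zero; [lra|]; intros j Hj.
      apply Rmax_right.
      pose proof (sum_agents_ge_term n (fun j => peak (Rp j)) j peaks_ge0 Hj); unfold psum; lra. }
    destruct (IVT_cor excess 0 (psum n Rp) Hcont psum_ge0) as (d & Hd & Hroot).
    { rewrite Hexcess0, Hexcess_psum; nra. }
    exists d; split; [lra|].
    unfold ced_alloc; destruct Rle_dec; [|contradiction].
    unfold excess in Hroot; lra.
  - exists ((Om - psum n Rp) / INR n); split.
    + apply Rle_mult_inv_pos; lra.
    + rewrite ced_alloc_supply_sum by exact Hsupply; field; lra.
Qed.

Lemma ced_d_spec :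
  0 <= ced_d n Rp Om /\ sum_agents n (ced_alloc n Rp Om (ced_d n Rp Om)) = Om.
Proof. exact (epsilon_spec (inhabits 0) _ ced_distance_exists). Qed.

Lemma CED_excess_supply i : psum n Rp < Om ->
  CED n Rp Om i = peak (Rp i) + (Om - psum n Rp) / INR n.
Proof.
  intros Hsupply; destruct ced_d_spec as [_ Hsum].
  rewrite ced_alloc_supply_sum in Hsum by lra.
  unfold CED, ced_alloc; destruct Rle_dec; [lra|].
  set (d := ced_d n Rp Om) in *.
  apply Rplus_eq_compat_l; rewrite <- Hsum; field; lra.
Qed.

Lemma CED_zero_peak_bounds i : peak (Rp i) = 0 -> 0 <= CED n Rp Om i <= Om / INR n.
Proof.
  intros Hpeak; pose proof psum_ge0.
  assert (0 <= Om / INR n) by (apply Rle_mult_inv_pos; lra).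
  destruct (Rle_dec Om (psum n Rp)) as [Hdemand|Hsupply].
  - destruct ced_d_spec as [Hd _].
    unfold CED, ced_alloc; destruct Rle_dec; [|contradiction].
    rewrite Hpeak, Rmax_right; lra.
  - rewrite CED_excess_supply, Hpeak, Rplus_0_l by lra.
    split; [apply Rle_mult_inv_pos; lra|].
    apply Rmult_le_compat_r; [left; apply Rinv_0_lt_compat|]; lra.
Qed.

End ConstrainedEqualDistance.

Lemma Pro_zero_peak_bounds n Rp Om i : (0 < n)%nat -> 0 <= Om -> peak (Rp i) = 0 ->
  0 <= Pro n Rp Om i <= Om / INR n.
Proof.
  intros Hn HOm Hpeak.
  assert (0 <= Om / INR n) by (apply Rle_mult_inv_pos; [|apply lt_0_INR]; assumption).
  unfold Pro; destruct Rlt_dec; [rewrite Hpeak; unfold Rdiv; lra|lra].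
Qed.

Lemma Pro_sole_claimant n Rp Om i : 0 < peak (Rp i) -> psum n Rp = peak (Rp i) ->
  Pro n Rp Om i = Om.
Proof.
  intros Hpeak Hpsum; unfold Pro; rewrite Hpsum.
  destruct Rlt_dec; [field|]; lra.
Qed.

Lemma upd_same Rp i Ri : upd Rp i Ri i = Ri.
Proof. unfold upd; now rewrite Nat.eqb_refl. Qed.

Lemma peak_upd_dist_pref Rp i p : 0 <= p -> peak (upd Rp i (dist_pref p) i) = p.
Proof. intros Hp; rewrite upd_same; now apply peak_dist_pref. Qed.

Lemma peak_upd_ge0 n i Rmi Ri : valid_others n i Rmi -> SP Ri ->
  forall j, (j < n)%nat -> 0 <= peak (upd Rmi i Ri j).
Proof.
  intros Hothers HRi j Hj; unfold upd.
  destruct (Nat.eqb_spec j i); apply peak_ge0; auto.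
Qed.

Definition zero_peaks : profile := fun _ => dist_pref 0.

Lemma valid_others_zero_peaks n i : valid_others n i zero_peaks.
Proof. intros j _ _; apply dist_pref_SP; lra. Qed.

Lemma psum_upd_zero_peaks n i Ri : (i < n)%nat -> psum n (upd zero_peaks i Ri) = peak Ri.
Proof.
  intros Hi; unfold psum; rewrite (sum_agents_single n _ i Hi), upd_same; [reflexivity|].
  intros j _ Hji; unfold upd; destruct (Nat.eqb_spec j i); [contradiction|].
  apply peak_dist_pref; lra.
Qed.

Lemma obvious_manipulation_of_worst_case phi n i Ri Ri' Om Rmi0 :
  SP Ri' -> valid_others n i Rmi0 ->
  (forall Rmi, valid_others n i Rmi ->
     strict Ri (Some (phi n (upd Rmi i Ri') Om i)) (Some (phi n (upd Rmi0 i Ri) Om i))) ->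
  obvious_manipulation phi n i Ri Ri' Om.
Proof.
  intros HRi' HRmi0 Hbetter; split.
  - split; [exact HRi'|]; exists Rmi0; auto.
  - intros x' (Rmi & HRmi & ->).
    exists (phi n (upd Rmi0 i Ri) Om i); split; [now exists Rmi0|auto].
Qed.

Lemma obviously_manipulable_by_zero_report phi n i Om : (i < n)%nat -> 0 < Om ->
  (forall Rmi, valid_others n i Rmi -> 0 <= phi n (upd Rmi i (dist_pref 0)) Om i <= 2) ->
  2 < phi n (upd zero_peaks i (dist_pref 1)) Om i ->
  obviously_manipulable phi n.
Proof.
  intros Hi HOm Hlie Htruth.
  exists i, (dist_pref 1), Om, (dist_pref 0).
  split; [exact Hi|split; [apply dist_pref_SP; lra|split; [exact HOm|]]].
  apply obvious_manipulation_of_worst_case with zero_peaks;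
    [apply dist_pref_SP; lra|apply valid_others_zero_peaks|].
  intros Rmi HRmi; apply dist_pref_strict.
  specialize (Hlie Rmi HRmi); case_abs.
Qed.

Lemma endowment_share_le2 n : (2 <= n)%nat -> (INR n + 2) / INR n <= 2.
Proof.
  intros Hn; assert (HN : 2 <= INR n) by (apply (le_INR 2); exact Hn).
  replace ((INR n + 2) / INR n) with (1 + 2 / INR n) by (field; lra).
  apply Rplus_le_compat_l, Rmult_le_reg_r with (INR n); [lra|].
  unfold Rdiv; rewrite Rmult_assoc, Rinv_l; lra.
Qed.

Lemma CED_obviously_manipulable n : (2 <= n)%nat -> obviously_manipulable CED n.
Proof.
  intros Hn; assert (Hn0 : (0 < n)%nat) by lia.
  assert (HN : 2 <= INR n) by (apply (le_INR 2); exact Hn).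
  pose proof (endowment_share_le2 n Hn).
  apply obviously_manipulable_by_zero_report with 0%nat (INR n + 2); [exact Hn0|lra| |].
  - intros Rmi HRmi.
    assert (Hpeaks : forall j, (j < n)%nat -> 0 <= peak (upd Rmi 0%nat (dist_pref 0) j))
      by (apply peak_upd_ge0; [exact HRmi|apply dist_pref_SP; lra]).
    pose proof (CED_zero_peak_bounds n _ (INR n + 2) Hn0 ltac:(lra) Hpeaks 0%nat
                  ltac:(apply peak_upd_dist_pref; lra)).
    lra.
  - assert (Hpeaks : forall j, (j < n)%nat -> 0 <= peak (upd zero_peaks 0%nat (dist_pref 1) j))
      by (apply peak_upd_ge0; [apply valid_others_zero_peaks|apply dist_pref_SP; lra]).
    assert (Hpsum : psum n (upd zero_peaks 0%nat (dist_pref 1)) = 1)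
      by (rewrite psum_upd_zero_peaks by exact Hn0; apply peak_dist_pref; lra).
    rewrite CED_excess_supply, Hpsum, peak_upd_dist_pref; try lra; try assumption.
    replace ((INR n + 2 - 1) / INR n) with (1 + 1 / INR n) by (field; lra).
    pose proof (Rdiv_lt_0_compat 1 (INR n) Rlt_0_1 ltac:(lra)); lra.
Qed.

Lemma Pro_obviously_manipulable n : (2 <= n)%nat -> obviously_manipulable Pro n.
Proof.
  intros Hn; assert (Hn0 : (0 < n)%nat) by lia.
  assert (HN : 2 <= INR n) by (apply (le_INR 2); exact Hn).
  pose proof (endowment_share_le2 n Hn).
  apply obviously_manipulable_by_zero_report with 0%nat (INR n + 2); [exact Hn0|lra| |].
  - intros Rmi _.
    pose proof (Pro_zero_peak_bounds n (upd Rmi 0%nat (dist_pref 0)) (INR n + 2) 0%nat Hn0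
                  ltac:(lra) ltac:(apply peak_upd_dist_pref; lra)).
    lra.
  - rewrite Pro_sole_claimant; [lra|rewrite peak_upd_dist_pref; lra|].
    rewrite psum_upd_zero_peaks by exact Hn0; now rewrite upd_same.
Qed.

Theorem proposition2 : forall n : nat, (2 <= n)%nat ->
  obviously_manipulable CED n /\ obviously_manipulable Pro n.
Proof.
  intros n Hn; split.
  - exact (CED_obviously_manipulable n Hn).
  - exact (Pro_obviously_manipulable n Hn).
Qed.
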